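(* Let $\mathcal{H}$ be a real Hilbert space, $\Gamma\subseteq\mathbb{R}_{++}$ a nonempty closed interval, $A_1:\mathcal{H}\to\mathcal{H}$ maximally monotone and $L$-Lipschitz, and $A_2:\mathcal{H}\rightrightarrows\mathcal{H}$ maximally $\mu$-strongly monotone, with $\mathcal{P}:=\operatorname{zer}(A_1+A_2)\neq\emptyset$. Let $\mathcal{D}:=\operatorname{zer}(A_1^{-1}-A_2^{-1}\circ(-\mathrm{Id}))$, let $(\gamma_n)_{n\in\mathbb{N}}\subseteq\Gamma$ converge $R$-linearly to $\gamma^*\in\Gamma$, and let $T_\gamma:=\mathrm{Id}-J_{\gamma A_1}+J_{\gamma A_2}(2J_{\gamma A_1}-\mathrm{Id})$. Given $x_0\in\mathcal{H}$, set $z_0:=J_{\gamma_0A_1}x_0$ and for $n\in\mathbb{N}$ define $y_n:=J_{\gamma_nA_2}(2z_n-x_n)$, $w_n:=x_n-z_n+y_n$, $z_{n+1}:=J_{\gamma_nA_1}w_n$, $x_{n+1}:=\frac{\gamma_{n+1}}{\gamma_n}w_n+\big(1-\frac{\gamma_{n+1}}{\gamma_n}\big)z_{n+1}$. Then: (i) $(x_n)$ and $(w_n)$ converge $R$-linearly to the same point $x\in\operatorname{Fix}T_{\gamma^*}$; (ii) $(z_n)$ and $(y_n)$ converge $R$-linearly to the same point $z:=J_{\gamma^*A_1}x\in\mathcal{P}$; (iii) $\big(\frac{x_n-z_n}{\gamma_n}\big)$ and $\big(\frac{w_n-y_n}{\gamma_n}\big)$ converge $R$-linearly to $g:=\fr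ac{x-z}{\gamma^*}\in\mathcal{D}$.
   Context: $\operatorname{zer}A=\{x:0\in Ax\}$; $J_A=(\mathrm{Id}+A)^{-1}$; $A^{-1}$ is the inverse operator; $\operatorname{Fix}T=\{x:Tx=x\}$. $A_2$ is $\mu$-strongly monotone if $\langle x-y,u-v\rangle\ge\mu\|x-y\|^2$ for all $(x,u),(y,v)\in\operatorname{gra}A_2$. A sequence $(a_n)$ converges $R$-linearly to $a$ if there exist $C\ge0$, $r\in(0,1)$ with $\|a_n-a\|\le Cr^n$ for all $n$. *)

From HB Require Import structures.
From mathcomp Require Import all_boot all_order all_algebra.
From mathcomp Require Import all_classical all_reals all_analysis.
Set Implicit Arguments. Unset Strict Implicit. Unset Printing Implicit Defensive.
Import Order.TTheory GRing.Theory Num.Theory.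
Import numFieldNormedType.Exports.
Local Open Scope classical_set_scope.
Local Open Scope ring_scope.

(* Real Hilbert space: a complete normed space over R : realType whose norm
   comes from an inner product [ip]. *)
Definition is_inner_product (R : realType) (H : normedModType R)
  (ip : H -> H -> R) : Prop :=
  [/\ (forall x y, ip x y = ip y x),
      (forall a x y z, ip (a *: x + y) z = a * ip x z + ip y z),
      (forall x, 0 <= ip x x) &
      (forall x, `|x| ^+ 2 = ip x x)].

Definition graph_op (H : Type) (f : H -> H) : H -> set H := fun x => [set f x].

Definition op_sum (R : realType) (H : normedModType R) (A B : H -> set H)
  : H -> set H := fun x => [set a + b | a in A x & b in B x].

Definition op_inv (H : Type) (A : H -> set H) : H -> set H :=
  fun u => [set x | A x u].

Definition op_sub (R : realType) (H : normedModType R) (A B : H -> set H)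
  : H -> set H := fun x => [set a - b | a in A x & b in B x].

Definition op_compneg (R : realType) (H : normedModType R) (A : H -> set H)
  : H -> set H := fun x => A (- x).

Definition zer (R : realType) (H : normedModType R) (A : H -> set H) : set H :=
  [set x | A x 0].

Definition monotone_op (R : realType) (H : normedModType R)
  (ip : H -> H -> R) (A : H -> set H) : Prop :=
  forall x y u v, A x u -> A y v -> 0 <= ip (x - y) (u - v).

Definition strongly_monotone (R : realType) (H : normedModType R)
  (ip : H -> H -> R) (mu : R) (A : H -> set H) : Prop :=
  forall x y u v, A x u -> A y v -> mu * `|x - y| ^+ 2 <= ip (x - y) (u - v).

Definition maximally_monotone (R : realType) (H : normedModType R)
  (ip : H -> H -> R) (A : H -> set H) : Prop :=
  monotone_op ip A /\
  forall B : H -> set H, monotone_op ip B ->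
    (forall x u, A x u -> B x u) -> forall x u, B x u -> A x u.

Definition lipschitz_op (R : realType) (H : normedModType R) (L : R)
  (f : H -> H) : Prop := forall x y, `|f x - f y| <= L * `|x - y|.

(* Resolvent J_{γA} = (Id + γA)^{-1}: p = J x iff x ∈ p + γ A p.  For maximally
   monotone A and γ > 0 this is single-valued and everywhere defined; we pick
   the unique point with xget. *)
Definition resolvent (R : realType) (H : normedModType R) (g : R)
  (A : H -> set H) (x : H) : H :=
  xget 0 [set p | exists a, A p a /\ x = p + g *: a].

Definition T_op (R : realType) (H : normedModType R) (g : R)
  (A1 A2 : H -> set H) (x : H) : H :=
  x - resolvent g A1 x + resolvent g A2 (2%:R *: resolvent g A1 x - x).

Definition Fix (H : Type) (T : H -> H) : set H := [set x | T x = x].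

Definition Rlinear_cvg (R : realType) (V : normedModType R) (a : nat -> V)
  (l : V) : Prop :=
  exists C r : R, [/\ 0 <= C, 0 < r, r < 1 &
                   forall n, `|a n - l| <= C * r ^+ n].

Definition pos_closed_interval (R : realType) (G : set R) : Prop :=
  [/\ G !=set0, closed G, (forall a b c, G a -> G b -> a <= c -> c <= b -> G c)
    & (forall a, G a -> 0 < a)].

From HB Require Import structures.
From mathcomp Require Import all_boot all_order all_algebra.
From mathcomp Require Import all_classical all_reals all_analysis.
From mathcomp Require Import ring lra.
Import Order.TTheory GRing.Theory Num.Theory.
Import numFieldNormedType.Exports.
Local Open Scope classical_set_scope.
Local Open Scope ring_scope.
Set Implicit Arguments. Unset Strict Implicit. Unset Printing Implicit Defensive.

(* Resolvents exist by Minty's theorem, proved with the Fitzpatrick function F_A: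
   minimising c + (|x|^2 + |u|^2) / 2 over the pairs with F_A(x, u) <= c yields,
   by the parallelogram law and completeness, a minimiser (x, u) which is
   monotonically related to the graph of A, so that x = -u and u is in A(-u).

   For the iteration, fix z* in zer (A1 + A2) and g* := A1 z*, and compare x_n
   and w_n with the moving point z* + gamma_n g*.  Strong monotonicity of A2 and
   Lipschitz continuity of A1 make the step x_n -> w_n a contraction by a factor
   kappa < 1 that is uniform for gamma_n in [gamma_min, gamma_max]; passing from
   gamma_n to gamma_(n+1) costs a factor gamma_(n+1) / gamma_n <= 1 + d r^n, and
   the product of these factors is bounded by exp (d / (1 - r)).  So the distance
   from x_n to z* + gamma_n g* decays geometrically, it controls every other
   quantity, and the limit is x = z* + gamma* g*. *)

Section InnerProduct.
Variables (R : realType) (H : normedModType R) (ip : H -> H -> R).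
Hypothesis hip : is_inner_product ip.

Lemma ipC x y : ip x y = ip y x.
Proof. by case: hip. Qed.

Lemma ipDZl a x y z : ip (a *: x + y) z = a * ip x z + ip y z.
Proof. by case: hip. Qed.

Lemma ipxx x : ip x x = `|x| ^+ 2.
Proof. by case: hip => _ _ _ ->. Qed.

Lemma ip0l z : ip 0 z = 0.
Proof. by have := ipDZl 1 0 0 z; rewrite scaler0 addr0 mul1r; lra. Qed.

Lemma ipDl x y z : ip (x + y) z = ip x z + ip y z.
Proof. by have := ipDZl 1 x y z; rewrite scale1r mul1r. Qed.

Lemma ipZl a x z : ip (a *: x) z = a * ip x z.
Proof. by have := ipDZl a x 0 z; rewrite addr0 ip0l addr0. Qed.

Lemma ipNl x z : ip (- x) z = - ip x z.
Proof. by rewrite -scaleN1r ipZl mulN1r. Qed.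

Lemma ip0r z : ip z 0 = 0.
Proof. by rewrite ipC ip0l. Qed.

Lemma ipDr x y z : ip z (x + y) = ip z x + ip z y.
Proof. by rewrite ipC ipDl !(ipC z). Qed.

Lemma ipZr a x z : ip z (a *: x) = a * ip z x.
Proof. by rewrite ipC ipZl ipC. Qed.

Lemma ipNr x z : ip z (- x) = - ip z x.
Proof. by rewrite ipC ipNl ipC. Qed.

Definition ipE := (ipDl, ipDr, ipZl, ipZr, ipNl, ipNr, ip0l, ip0r).

Lemma sqr_normD x y : `|x + y| ^+ 2 = `|x| ^+ 2 + 2 * ip x y + `|y| ^+ 2.
Proof. by rewrite -!ipxx !ipE (ipC y x); ring. Qed.

Lemma sqr_normB x y : `|x - y| ^+ 2 = `|x| ^+ 2 - 2 * ip x y + `|y| ^+ 2.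
Proof. by rewrite -!ipxx !ipE (ipC y x); ring. Qed.

Lemma parallelogram (x y : H) :
  `|x + y| ^+ 2 + `|x - y| ^+ 2 = 2 * `|x| ^+ 2 + 2 * `|y| ^+ 2.
Proof. by rewrite sqr_normD sqr_normB; ring. Qed.

Lemma ip_le_norm x y : ip x y <= `|x| * `|y|.
Proof.
have [->|x0] := eqVneq x 0; first by rewrite ip0l normr0 mul0r.
have [->|y0] := eqVneq y 0; first by rewrite ip0r normr0 mulr0.
have nxy : 0 < `|x| * `|y| by rewrite mulr_gt0 ?normr_gt0.
have := sqr_ge0 (Num.norm (`|y| *: x - `|x| *: y)).
rewrite sqr_normB !normrZ !ipE !normr_id => h.
rewrite -subr_ge0 -(pmulr_rge0 _ nxy); nra.
Qed.

Lemma norm_ip_le x y : `|ip x y| <= `|x| * `|y|.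
Proof. by rewrite ler_norml ip_le_norm andbT lerNl -ipNl -(normrN x) ip_le_norm. Qed.

Lemma ip_ge0_normDl a b : 0 <= ip a b -> `|a| <= `|a + b|.
Proof.
move=> hab; rewrite -ler_sqr ?nnegrE // sqr_normD.
by have := sqr_ge0 `|b|; lra.
Qed.

Lemma ip_ge0_normDr a b : 0 <= ip a b -> `|b| <= `|a + b|.
Proof. by rewrite addrC ipC; apply: ip_ge0_normDl. Qed.

Lemma ip_ge0_normD_rescale a b g g' c : 0 <= ip a b -> 0 <= g -> 0 <= g' ->
  1 <= c -> g' <= c * g -> `|a + g' *: b| <= c * `|a + g *: b|.
Proof.
move=> hab g0 g'0 c1 hc.
have c0 : 0 <= c by lra.
rewrite -ler_sqr ?nnegrE ?mulr_ge0 // exprMn !sqr_normD !normrZ !ipZr.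
rewrite !ger0_norm // !exprMn.
have c2 : 1 <= c ^+ 2 by rewrite expr_ge1.
have h1 : g' <= c ^+ 2 * g by rewrite (le_trans hc) // ler_wpM2r // expr2 ler_peMl.
have h2 : g' ^+ 2 <= c ^+ 2 * g ^+ 2 by rewrite -exprMn ler_sqr ?nnegrE ?mulr_ge0.
have := sqr_ge0 `|a|; have := sqr_ge0 `|b|.
move: (`|a| ^+ 2) (`|b| ^+ 2) => na nb na0 nb0.
have : 0 <= (c ^+ 2 - 1) * nb by apply: mulr_ge0; lra.
have : 0 <= (c ^+ 2 * g - g') * ip a b by apply: mulr_ge0; lra.
have : 0 <= (c ^+ 2 * g ^+ 2 - g' ^+ 2) * na by apply: mulr_ge0; lra.
nra.
Qed.

Lemma cvgn_ipl (u : nat -> H) a v : u n @[n --> \oo] --> a ->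
  ip (u n) v @[n --> \oo] --> ip a v.
Proof.
move=> /cvgrPdist_le ua; apply/cvgrPdist_le => e e0.
have v1 : 0 < `|v| + 1 by rewrite ltr_wpDl.
near=> n; rewrite -ipNl -ipDl.
apply: le_trans (norm_ip_le _ _) _.
have : `|a - u n| <= e / (`|v| + 1) by near: n; apply: ua; rewrite divr_gt0.
rewrite ler_pdivlMr // => h.
apply: le_trans h; rewrite ler_wpM2l //; lra.
Unshelve. all: by end_near.
Qed.

End InnerProduct.

Lemma slope_ge0 (R : realFieldType) (Q K : R) : 0 <= K ->
  (forall t, 0 < t -> t <= 1 -> 0 <= t * Q + t ^+ 2 * K) -> 0 <= Q.
Proof.
move=> K0 h; have [//|Q0] := lerP 0 Q; exfalso.
have KQ : 0 < K - Q by lra.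
have t0 : 0 < - Q / (K - Q) by rewrite divr_gt0 //; lra.
have t1 : - Q / (K - Q) <= 1 by rewrite ler_pdivrMr //; lra.
have := h _ t0 t1.
have -> : - Q / (K - Q) * Q + (- Q / (K - Q)) ^+ 2 * K = Q ^+ 2 * Q / (K - Q) ^+ 2.
  by field; lra.
have Q2 : 0 < Q ^+ 2 by rewrite exprn_even_gt0 //= lt_eqF.
have : Q ^+ 2 * Q / (K - Q) ^+ 2 < 0.
  by rewrite pmulr_llt0 ?invr_gt0 ?exprn_gt0 // pmulr_rlt0.
lra.
Qed.

Lemma cvgn_sqr_dist_le (R : realType) (V : completeNormedModType R) (s : nat -> V) (c : R) :
  (forall k l, `|s k - s l| ^+ 2 <= c * (k.+1%:R^-1 + l.+1%:R^-1)) -> cvgn s.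
Proof.
move=> hs; apply: cauchy_cvg; apply/cauchyP => e e0.
have e20 : 0 < e ^+ 2 by rewrite exprn_gt0.
have c0 : 0 <= c.
  have := hs 0%N 0%N; rewrite subrr normr0 expr0n /=.
  by rewrite pmulr_lge0 // addr_gt0.
pose N := Num.Def.archi_bound (2 * c / e ^+ 2).
have hN : 2 * c / e ^+ 2 < N%:R.
  by apply: archi_boundP; rewrite divr_ge0 ?mulr_ge0 // ltW.
exists (s N); exists N => // k /= hk.
rewrite -ball_normE /ball_ /= -ltr_sqr ?nnegrE ?(ltW e0) //.
apply: le_lt_trans (hs N k) _.
have hkN : k.+1%:R^-1 <= N.+1%:R^-1 :> R by rewrite lef_pV2 ?posrE // ler_nat.
have hN1 : 2 * c / N.+1%:R < e ^+ 2.
  rewrite ltr_pdivrMr // -ltr_pdivrMl // mulrC; apply: lt_le_trans hN _.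
  by rewrite ler_nat.
rewrite -mulrA mulr_natl mulr2n in hN1; apply: le_lt_trans hN1.
by rewrite mulrDr lerD2l ler_wpM2l.
Qed.

Section MaximalMonotone.
Variables (R : realType) (H : completeNormedModType R) (ip : H -> H -> R).
Hypothesis hip : is_inner_product ip.
Local Notation ipE := (ipE hip).

Lemma maximally_monotone_related (A : H -> set H) : maximally_monotone ip A ->
  forall x u, (forall y v, A y v -> 0 <= ip (x - y) (u - v)) -> A x u.
Proof.
move=> [mA maxA] x u hxu.
apply: (maxA (fun p q => A p q \/ (p = x /\ q = u))); [| by left | by right].
move=> p p' q q' [hA|[-> ->]] [hA'|[-> ->]].
- exact: mA.
- by rewrite -opprB -(opprB u) (ipNl hip) (ipNr hip) opprK; apply: hxu.
- exact: hxu.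
- by rewrite !subrr (ip0l hip).
Qed.

Lemma maximally_monotone_graph_n0 (A : H -> set H) : maximally_monotone ip A ->
  exists y v, A y v.
Proof.
move=> hA; have [//|hA0] := pselect (exists y v, A y v).
exists 0, 0; apply: (maximally_monotone_related hA) => y v hyv.
by exfalso; apply: hA0; exists y, v.
Qed.

Definition fitzpatrick_le (A : H -> set H) (x u : H) (c : R) :=
  forall y v, A y v -> ip x v + ip y u - ip y v <= c.

Definition qnorm (x u : H) : R := (`|x| ^+ 2 + `|u| ^+ 2) / 2.

Lemma fitzpatrick_le_ip A x u c : maximally_monotone ip A ->
  fitzpatrick_le A x u c -> ip x u <= c.
Proof.
move=> hA hF; rewrite leNgt; apply/negP => hc.
have hAxu : A x u.
  by apply: (maximally_monotone_related hA) => y v /hF; rewrite !ipE; lra.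
by have := hF x u hAxu; lra.
Qed.

Lemma fitzpatrick_le_graph A y0 v0 : monotone_op ip A -> A y0 v0 ->
  fitzpatrick_le A y0 v0 (ip y0 v0).
Proof. by move=> mA h y v /(mA _ _ _ _ h); rewrite !ipE; lra. Qed.

Lemma fitzpatrick_le_midpoint A x u c x' u' c' :
  fitzpatrick_le A x u c -> fitzpatrick_le A x' u' c' ->
  fitzpatrick_le A (2^-1 *: (x + x')) (2^-1 *: (u + u')) ((c + c') / 2).
Proof. by move=> h h' y v hyv; have := h y v hyv; have := h' y v hyv; rewrite !ipE; lra. Qed.

Lemma fitzpatrick_le_segment A x u c y v t : monotone_op ip A ->
  fitzpatrick_le A x u c -> A y v -> 0 <= t -> t <= 1 ->
  fitzpatrick_le A (x + t *: (y - x)) (u + t *: (v - u)) ((1 - t) * c + t * ip y v).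
Proof.
move=> mA h hyv t0 t1 y' v' hy'.
have := fitzpatrick_le_graph mA hyv hy'; have := h y' v' hy'.
rewrite !ipE; nra.
Qed.

Section Minty.
Variable A : H -> set H.
Hypothesis hA : maximally_monotone ip A.

Let fitz_vals : set R :=
  [set t | exists x u c, fitzpatrick_le A x u c /\ t = c + qnorm x u].
Let m := inf fitz_vals.

Lemma fitz_vals_ge0 : lbound fitz_vals 0.
Proof.
move=> t [x [u [c [hF ->]]]]; have := fitzpatrick_le_ip hA hF.
by have := sqr_ge0 `|x + u|; rewrite (sqr_normD hip) /qnorm; lra.
Qed.

Lemma inf_fitz_le x u c : fitzpatrick_le A x u c -> m <= c + qnorm x u.
Proof. by move=> hF; apply: ge_inf; [exists 0; apply: fitz_vals_ge0 | exists x, u, c]. Qed.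

Lemma fitz_minimizing : exists (xs us : nat -> H) (cs : nat -> R), forall k,
  fitzpatrick_le A (xs k) (us k) (cs k) /\ cs k + qnorm (xs k) (us k) < m + k.+1%:R^-1.
Proof.
have hinf : has_inf fitz_vals.
  split; last by exists 0; apply: fitz_vals_ge0.
  have [y [v hyv]] := maximally_monotone_graph_n0 hA.
  exists (ip y v + qnorm y v), y, v, (ip y v); split => //.
  exact: fitzpatrick_le_graph hA.1 hyv.
have /choice[s hs] : forall k : nat, exists p : H * H * R,
    fitzpatrick_le A p.1.1 p.1.2 p.2 /\ p.2 + qnorm p.1.1 p.1.2 < m + k.+1%:R^-1.
  move=> k; have k0 : 0 < k.+1%:R^-1 :> R by rewrite invr_gt0.
  have [_ [x [u [c [hF ->]]]] lt_m] := inf_adherent k0 hinf.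
  by exists (x, u, c).
by exists (fun k => (s k).1.1), (fun k => (s k).1.2), (fun k => (s k).2).
Qed.

Lemma fitz_minimizing_cauchy (xs us : nat -> H) (cs : nat -> R) :
  (forall k, fitzpatrick_le A (xs k) (us k) (cs k) /\
             cs k + qnorm (xs k) (us k) < m + k.+1%:R^-1) ->
  forall k l, `|xs k - xs l| ^+ 2 + `|us k - us l| ^+ 2
              <= 4 * (k.+1%:R^-1 + l.+1%:R^-1).
Proof.
move=> hs k l; have [hFk ltk] := hs k; have [hFl ltl] := hs l.
have := inf_fitz_le (fitzpatrick_le_midpoint hFk hFl).
rewrite /qnorm !normrZ ger0_norm ?invr_ge0 // !exprMn.
have -> : (2^-1 : R) ^+ 2 = 4^-1 by field.
have := parallelogram hip (xs k) (xs l); have := parallelogram hip (us k) (us l).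
move: ltk ltl; rewrite /qnorm; move: (k.+1%:R^-1) (l.+1%:R^-1) => ik il; lra.
Qed.

Lemma fitz_minimizing_limit (xs us : nat -> H) (cs : nat -> R) xb ub :
  (forall k, fitzpatrick_le A (xs k) (us k) (cs k) /\
             cs k + qnorm (xs k) (us k) < m + k.+1%:R^-1) ->
  xs n @[n --> \oo] --> xb -> us n @[n --> \oo] --> ub ->
  fitzpatrick_le A xb ub (m - qnorm xb ub).
Proof.
move=> hs xs_xb us_ub y v hyv.
have qnorm_cvg : qnorm (xs n) (us n) @[n --> \oo] --> qnorm xb ub.
  rewrite /qnorm !expr2; under eq_fun do rewrite !expr2.
  by apply: cvgM; [apply: cvgD; apply: cvgM; apply: cvg_norm | exact: cvg_cst].
have : ip (xs n) v + ip (us n) y - ip y v + qnorm (xs n) (us n) - n.+1%:R^-1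
         @[n --> \oo] --> ip xb v + ip ub y - ip y v + qnorm xb ub - 0.
  apply: cvgB; last exact: cvg_harmonic.
  apply: cvgD qnorm_cvg; apply: cvgB; last exact: cvg_cst.
  by apply: cvgD; apply: cvgn_ipl.
move=> /cvgr_to_le le_lim.
have : ip xb v + ip ub y - ip y v + qnorm xb ub - 0 <= m.
  apply: le_lim; apply: nearW => n; have [hF lt_m] := hs n.
  have := hF y v hyv; rewrite (ipC hip y (us n)).
  by move: lt_m; move: (n.+1%:R^-1) => i; lra.
by rewrite (ipC hip ub); lra.
Qed.

Lemma fitz_minimizer_related xb ub : fitzpatrick_le A xb ub (m - qnorm xb ub) ->
  forall y v, A y v -> `|xb + ub| ^+ 2 <= ip (y + ub) (v + xb).
Proof.
move=> hF y v hyv.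
have slope : 0 <= ip y v - (m - qnorm xb ub) + ip xb (y - xb) + ip ub (v - ub).
  apply: (@slope_ge0 _ _ (qnorm (y - xb) (v - ub))).
    by rewrite /qnorm divr_ge0 // addr_ge0 // sqr_ge0.
  move=> t t0 t1.
  have := inf_fitz_le (fitzpatrick_le_segment hA.1 hF hyv (ltW t0) t1).
  rewrite /qnorm (sqr_normD hip xb) (sqr_normD hip ub) !normrZ !(ipZr hip).
  by rewrite ger0_norm ?(ltW t0) // !exprMn; nra.
have := fitzpatrick_le_ip hA hF; move: slope.
rewrite (sqr_normD hip) !ipE -!(ipxx hip) (ipC hip y xb) (ipC hip ub xb) /qnorm.
lra.
Qed.

Lemma minty_zero : exists p, A p (- p).
Proof.
have [xs [us [cs hs]]] := fitz_minimizing.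
have cauchy := fitz_minimizing_cauchy hs.
have xs_cvg : cvgn xs.
  apply: (@cvgn_sqr_dist_le _ _ _ 4) => k l.
  move: (cauchy k l) (sqr_ge0 `|us k - us l|).
  by move: (k.+1%:R^-1 + l.+1%:R^-1) => i; lra.
have us_cvg : cvgn us.
  apply: (@cvgn_sqr_dist_le _ _ _ 4) => k l.
  move: (cauchy k l) (sqr_ge0 `|xs k - xs l|).
  by move: (k.+1%:R^-1 + l.+1%:R^-1) => i; lra.
have rel := fitz_minimizer_related (fitz_minimizing_limit hs xs_cvg us_cvg).
set xb := limn xs in rel; set ub := limn us in rel.
have hA' : A (- ub) (- xb).
  apply: (maximally_monotone_related hA) => y v /rel.
  rewrite -!opprD (ipNl hip) (ipNr hip) opprK !(addrC _ y) !(addrC _ v).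
  exact/le_trans/sqr_ge0.
have := rel _ _ hA'; rewrite !addNr (ip0l hip) => h0.
have /eqP : `|xb + ub| ^+ 2 = 0 by apply/eqP; rewrite eq_le h0 sqr_ge0.
rewrite sqrf_eq0 normr_eq0 addr_eq0 => /eqP xbE.
by exists (- ub); move: hA'; rewrite xbE !opprK.
Qed.

End Minty.

Lemma minty (A : H -> set H) g x : maximally_monotone ip A -> 0 < g ->
  exists p a, A p a /\ x = p + g *: a.
Proof.
move=> [mA maxA] g0.
pose B q v := exists a, A (q + x) a /\ v = g *: a.
have mB : monotone_op ip B.
  move=> q q' v v' [a [ha ->]] [a' [ha' ->]].
  have := mA _ _ _ _ ha ha'.
  rewrite -scalerBr (ipZr hip) opprD addrACA subrr addr0 => h.
  by rewrite mulr_ge0 // ltW.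
have maxB : maximally_monotone ip B.
  split => // C mC BC q v hC.
  pose C' p u := C (p - x) (g *: u).
  have mC' : monotone_op ip C'.
    move=> p p' u u' h1 h2; have := mC _ _ _ _ h1 h2.
    rewrite -scalerBr (ipZr hip) opprD addrACA subrr addr0 => h.
    by rewrite -(pmulr_rge0 _ g0).
  have AC' p u : A p u -> C' p u.
    by move=> h; apply: BC; exists u; rewrite subrK.
  have := maxA C' mC' AC' (q + x) (g^-1 *: v).
  rewrite /C' addrK scalerA divff ?gt_eqF // scale1r => /(_ hC) hA.
  by exists (g^-1 *: v); rewrite scalerA divff ?gt_eqF // scale1r.
have [q [a [ha hq]]] := minty_zero maxB.
by exists (q + x), a; rewrite -hq addrAC subrr add0r.
Qed.

Lemma resolvent_eq (A : H -> set H) g x p a : monotone_op ip A -> 0 < g ->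
  A p a -> x = p + g *: a -> resolvent g A x = p.
Proof.
move=> mA g0 ha hx; apply: xget_unique; first by exists a.
move=> p' [a' [ha' hx']].
have dp : p' - p = g *: (a - a').
  have -> : p' = x - g *: a' by rewrite hx' addrK.
  by rewrite hx scalerBr addrAC (addrC p) addrK.
have := mA _ _ _ _ ha' ha.
rewrite dp (ipZl hip) -[a' - a]opprB (ipNr hip) (ipxx hip) pmulr_rge0 // oppr_ge0.
move=> le0.
have : `|a - a'| ^+ 2 == 0 by rewrite eq_le le0 sqr_ge0.
by rewrite sqrf_eq0 normr_eq0 => /eqP aE; apply/eqP; rewrite -subr_eq0 dp aE scaler0.
Qed.

Lemma resolvent_spec (A : H -> set H) g x : maximally_monotone ip A -> 0 < g ->
  exists a, A (resolvent g A x) a /\ x = resolvent g A x + g *: a.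
Proof.
move=> hA g0; have [p [a [ha hx]]] := minty x hA g0.
by rewrite (resolvent_eq hA.1 g0 ha hx); exists a.
Qed.

Lemma resolvent_graph_op (f : H -> H) g x : maximally_monotone ip (graph_op f) -> 0 < g ->
  x = resolvent g (graph_op f) x + g *: f (resolvent g (graph_op f) x).
Proof. by move=> hf g0; have [a [-> hx]] := resolvent_spec x hf g0. Qed.

End MaximalMonotone.

Section RlinearConvergence.
Variable R : realType.

Lemma Rlinear_cvg_le (V : normedModType R) (u : nat -> V) l (e : nat -> R) :
  Rlinear_cvg e 0 -> (forall n, `|u n - l| <= e n) -> Rlinear_cvg u l.
Proof.
move=> [C [r [C0 r0 r1 hC]]] hu; exists C, r; split => // n.
by apply: le_trans (hu n) _; have := hC n; rewrite subr0; apply: le_trans; apply: ler_norm.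
Qed.

Lemma Rlinear_cvg_dist (V : normedModType R) (u : nat -> V) l :
  Rlinear_cvg u l -> Rlinear_cvg (fun n => `|u n - l|) 0.
Proof. by move=> [C [r [C0 r0 r1 hC]]]; exists C, r; split => // n; rewrite subr0 normr_id. Qed.

Lemma Rlinear_cvg0D (e f : nat -> R) :
  Rlinear_cvg e 0 -> Rlinear_cvg f 0 -> Rlinear_cvg (fun n => e n + f n) 0.
Proof.
move=> [C [r [C0 r0 r1 hC]]] [C' [r' [C'0 r'0 r'1 hC']]].
exists (C + C'), (Num.max r r'); split; rewrite ?addr_ge0 ?lt_max ?gt_max ?r0 ?r1 //.
move=> n; rewrite subr0 mulrDl; apply: le_trans (ler_normD _ _) _.
have powX (s : R) : 0 < s -> s <= Num.max r r' -> s ^+ n <= Num.max r r' ^+ n.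
  by move=> s0 sm; rewrite lerXn2r ?nnegrE // (le_trans (ltW s0)).
apply: lerD.
  apply: le_trans (_ : C * r ^+ n <= _); first by rewrite -[e n]subr0.
  by rewrite ler_wpM2l // powX // le_max lexx.
apply: le_trans (_ : C' * r' ^+ n <= _); first by rewrite -[f n]subr0.
by rewrite ler_wpM2l // powX // le_max lexx orbT.
Qed.

Lemma Rlinear_cvg0M c (e : nat -> R) :
  Rlinear_cvg e 0 -> Rlinear_cvg (fun n => c * e n) 0.
Proof.
move=> [C [r [C0 r0 r1 hC]]]; exists (`|c| * C), r; split; rewrite ?mulr_ge0 // => n.
by rewrite subr0 normrM -mulrA ler_wpM2l // -[e n]subr0.
Qed.

Lemma perturbed_geometric_le (E : nat -> R) (d r k : R) :
  0 <= d -> 0 <= r -> r < 1 -> 0 <= k -> (forall n, 0 <= E n) ->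
  (forall n, E n.+1 <= (1 + d * r ^+ n) * k * E n) ->
  forall n, E n <= E 0%N * expR (d / (1 - r)) * k ^+ n.
Proof.
move=> d0 r0 r1 k0 E0 hE.
have r1' : 0 < 1 - r by lra.
suff h : forall n, E n <= E 0%N * expR (d * (1 - r ^+ n) / (1 - r)) * k ^+ n.
  move=> n.
  apply: le_trans (h n) _; rewrite ler_wpM2r ?exprn_ge0 // ler_wpM2l // ler_expR.
  by rewrite ler_pM2r ?invr_gt0 // ler_piMr // gerBl exprn_ge0.
elim=> [|n IH]; first by rewrite expr0 subrr mulr0 mul0r expR0 !mulr1.
set s := d * (1 - r ^+ n) / (1 - r) in IH *; set t := d * r ^+ n.
have -> : d * (1 - r ^+ n.+1) / (1 - r) = t + s by rewrite /s /t exprS; field; lra.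
apply: le_trans (hE n) _; rewrite -mulrA.
apply: le_trans (_ : expR t * (k * (E 0%N * expR s * k ^+ n)) <= _).
  apply: le_trans (ler_wpM2r _ (expR_ge1Dx t)) _; first by rewrite mulr_ge0.
  by rewrite ler_wpM2l ?expR_ge0 // ler_wpM2l.
by rewrite expRD exprS le_eqVlt; apply/orP; left; apply/eqP; ring.
Qed.

Lemma Rlinear_cvg_perturbed (E : nat -> R) (d r k : R) :
  0 <= d -> 0 <= r -> r < 1 -> 0 < k -> k < 1 -> (forall n, 0 <= E n) ->
  (forall n, E n.+1 <= (1 + d * r ^+ n) * k * E n) -> Rlinear_cvg E 0.
Proof.
move=> d0 r0 r1 k0 k1 E0 hE; exists (E 0%N * expR (d / (1 - r))), k.
split; rewrite ?mulr_ge0 ?expR_ge0 // => n.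
by rewrite subr0 ger0_norm //; apply: perturbed_geometric_le => //; apply: ltW.
Qed.

Lemma Rlinear_cvg_ratio_le (u : nat -> R) (l C r gmin : R) :
  0 < gmin -> (forall n, gmin <= u n) -> 0 <= r -> r <= 1 ->
  (forall n, `|u n - l| <= C * r ^+ n) ->
  forall n, u n.+1 <= (1 + 2 * C / gmin * r ^+ n) * u n.
Proof.
move=> gmin0 hu r0 r1 hC n.
have C0 : 0 <= C by have := hC 0%N; rewrite expr0 mulr1; apply: le_trans.
have hrn : C * r ^+ n.+1 <= C * r ^+ n by rewrite ler_wpM2l // exprS ler_piMl ?exprn_ge0.
have step : u n.+1 - u n <= 2 * C * r ^+ n.
  have := hC n; have := hC n.+1; rewrite !ler_norml => /andP[_ h1] /andP[h2 _]; lra.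
have : 2 * C * r ^+ n <= 2 * C / gmin * r ^+ n * u n.
  have -> : 2 * C / gmin * r ^+ n * u n = 2 * C * r ^+ n * (u n / gmin).
    by field; rewrite gt_eqF.
  by rewrite ler_peMr ?mulr_ge0 ?exprn_ge0 // ler_pdivlMr // mul1r.
by rewrite mulrDl mul1r; lra.
Qed.

End RlinearConvergence.

Lemma closed_gt0_lbound (R : realType) (G : set R) : closed G ->
  (forall a, G a -> 0 < a) -> exists2 e, 0 < e & forall a, G a -> e <= a.
Proof.
move=> Gcl Gpos; apply: contrapT => noe.
have G0 : G 0.
  apply: Gcl => B /nbhs_ballP[e /= e0 hB]; apply: contrapT => noG; apply: noe.
  exists e => // a Ga; rewrite leNgt; apply/negP => ae; apply: noG.
  exists a; split => //; apply: hB.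
  by rewrite -ball_normE /ball_ /= sub0r normrN gtr0_norm ?Gpos.
by have := Gpos 0 G0; rewrite ltxx.
Qed.

(* A squared norm contracting by th := 2 M^2 / (2 M^2 + nu) gives the rate
   (1 + th) / 2, an upper bound for sqrt th that avoids square roots. *)
Definition gap_rate (R : realFieldType) (M nu : R) : R :=
  (1 + 2 * M ^+ 2 / (2 * M ^+ 2 + nu)) / 2.

Lemma gap_rate_gt0 (R : realFieldType) (M nu : R) : 0 < nu -> 0 < gap_rate M nu.
Proof.
move=> nu0; have M2 := sqr_ge0 M.
by rewrite /gap_rate divr_gt0 // ltr_wpDr // divr_ge0 //; lra.
Qed.

Lemma gap_rate_lt1 (R : realFieldType) (M nu : R) : 0 < nu -> gap_rate M nu < 1.
Proof.
move=> nu0; have M2 := sqr_ge0 M.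
by rewrite /gap_rate ltr_pdivrMr // mul1r -ltrBrDl ltr_pdivrMr; lra.
Qed.

Lemma le_gap_rate (R : realFieldType) (w x p s M nu : R) :
  0 <= w -> 0 <= x -> 0 <= p -> 0 <= s -> 0 < nu ->
  w <= M * (p + s) -> nu * (p ^+ 2 + s ^+ 2) <= x ^+ 2 - w ^+ 2 ->
  w <= gap_rate M nu * x.
Proof.
move=> w0 x0 p0 s0 nu0 hw hgap.
have D0 : 0 < 2 * M ^+ 2 + nu by have := sqr_ge0 M; lra.
have w2 : w ^+ 2 <= 2 * M ^+ 2 * (p ^+ 2 + s ^+ 2).
  have : w ^+ 2 <= (M * (p + s)) ^+ 2 by rewrite ler_sqr ?nnegrE // (le_trans w0).
  by have := sqr_ge0 (p - s); have := sqr_ge0 M; nra.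
have theta : w ^+ 2 <= 2 * M ^+ 2 / (2 * M ^+ 2 + nu) * x ^+ 2.
  rewrite mulrAC ler_pdivlMr //; nra.
have th0 : 0 <= 2 * M ^+ 2 / (2 * M ^+ 2 + nu).
  by rewrite divr_ge0 ?(ltW D0) // mulr_ge0 ?sqr_ge0.
rewrite -ler_sqr ?nnegrE //; last by rewrite mulr_ge0 // ltW // gap_rate_gt0.
apply: le_trans theta _; rewrite exprMn ler_wpM2r ?sqr_ge0 // /gap_rate.
move: (2 * M ^+ 2 / _) th0 => th th0.
have -> : ((1 + th) / 2) ^+ 2 = th + (1 - th) ^+ 2 / 4 by field.
by rewrite lerDl divr_ge0 ?sqr_ge0.
Qed.

Definition dr_rate (R : realFieldType) (gmin gmax L mu : R) : R :=
  gap_rate (1 + gmax * L) (Num.min 1 (2 * gmin * mu)).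

Lemma dr_rate_gt0 (R : realFieldType) (gmin gmax L mu : R) :
  0 < gmin -> 0 < mu -> 0 < dr_rate gmin gmax L mu.
Proof. by move=> ? ?; apply: gap_rate_gt0; rewrite lt_min ltr01 !mulr_gt0. Qed.

Lemma dr_rate_lt1 (R : realFieldType) (gmin gmax L mu : R) :
  0 < gmin -> 0 < mu -> dr_rate gmin gmax L mu < 1.
Proof. by move=> ? ?; apply: gap_rate_lt1; rewrite lt_min ltr01 !mulr_gt0. Qed.

Section DouglasRachfordStep.
Variables (R : realType) (H : normedModType R) (ip : H -> H -> R).
Hypothesis hip : is_inner_product ip.
Local Notation ipE := (ipE hip).

Lemma dr_step_gap (dx dz dw dy da db : H) (g : R) :
  dz = dy + g *: (da + db) -> dw = dy + g *: da -> dx = dz + g *: da ->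
  `|dx| ^+ 2 - `|dw| ^+ 2 = 2 * g * (ip dy db + ip dz da) + g ^+ 2 * `|da + db| ^+ 2.
Proof.
move=> ez ew ex.
have -> : dx = dw + g *: (da + db) by rewrite ex ez ew scalerDr addrAC addrA.
rewrite (sqr_normD hip) normrZ exprMn real_normK ?num_real // ew ez !ipE (ipC hip db da).
by ring.
Qed.

(* In the iteration, dx, dw, dz, dy are the distances of x_n, w_n, z_n, y_n to
   their reference points, da = A1 z_n - g* and db = b + g* with b in A2 y_n. *)
Lemma dr_step_le (dx dz dw dy da db : H) (g gmin gmax L mu : R) :
  0 < mu -> 0 <= L -> 0 < gmin -> gmin <= g -> g <= gmax ->
  dz = dy + g *: (da + db) -> dw = dy + g *: da -> dx = dz + g *: da ->
  0 <= ip dz da -> mu * `|dy| ^+ 2 <= ip dy db -> `|da| <= L * `|dz| ->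
  `|dw| <= dr_rate gmin gmax L mu * `|dx|.
Proof.
move=> mu0 L0 gmin0 g1 g2 ez ew ex hI hS hL.
have g0 : 0 < g := lt_le_trans gmin0 g1.
have S0 : 0 <= g * `|da + db| by rewrite mulr_ge0 // ltW.
apply: (@le_gap_rate _ _ _ `|dy| (g * `|da + db|)) => //.
- by rewrite lt_min ltr01 !mulr_gt0.
- have hz : `|dz| <= `|dy| + g * `|da + db|.
    by rewrite ez; apply: le_trans (ler_normD _ _) _; rewrite normrZ gtr0_norm.
  have hw : `|dw| <= `|dy| + g * `|da|.
    by rewrite ew; apply: le_trans (ler_normD _ _) _; rewrite normrZ gtr0_norm.
  have hgL : g * `|da| <= gmax * L * (`|dy| + g * `|da + db|).
    rewrite -mulrA; apply: ler_pM => //; first exact: ltW.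
    by apply: le_trans hL _; rewrite ler_wpM2l.
  by rewrite mulrDl mul1r; lra.
- rewrite (dr_step_gap ez ew ex) exprMn.
  have nu1 : Num.min 1 (2 * gmin * mu) <= 1 by rewrite ge_min lexx.
  have nu2 : Num.min 1 (2 * gmin * mu) <= 2 * g * mu.
    by rewrite ge_min -!mulrA ler_pM2l // ler_pM2r // g1 orbT.
  move: (Num.min 1 _) nu1 nu2 => nu nu1 nu2.
  have := sqr_ge0 `|dy|; have := sqr_ge0 `|da + db|; have := sqr_ge0 g.
  nra.
Qed.

End DouglasRachfordStep.

Section DouglasRachford.
Variables (R : realType) (H : completeNormedModType R) (ip : H -> H -> R).
Hypothesis hip : is_inner_product ip.
Variables (A1 : H -> H) (A2 : H -> set H) (L mu : R).
Hypotheses (hA1 : maximally_monotone ip (graph_op A1)) (hL : lipschitz_op L A1)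
  (mu_gt0 : 0 < mu) (hA2 : maximally_monotone ip A2)
  (hS : strongly_monotone ip mu A2).
Variable zs : H.
Hypothesis zs_zer : A2 zs (- A1 zs).
Variables (gam : nat -> R) (gs C r gmin : R).
Hypotheses (gmin_gt0 : 0 < gmin) (gam_ge : forall n, gmin <= gam n) (gs_gt0 : 0 < gs)
  (r_gt0 : 0 < r) (r_lt1 : r < 1) (gam_near : forall n, `|gam n - gs| <= C * r ^+ n).
Variables x z y w : nat -> H.
Hypotheses (hz0 : z 0%N = resolvent (gam 0%N) (graph_op A1) (x 0%N))
  (hy : forall n, y n = resolvent (gam n) A2 (2%:R *: z n - x n))
  (hw : forall n, w n = x n - z n + y n)
  (hz : forall n, z n.+1 = resolvent (gam n) (graph_op A1) (w n))
  (hx : forall n, x n.+1 = (gam n.+1 / gam n) *: w n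
                           + (1 - gam n.+1 / gam n) *: z n.+1).

Let gam_gt0 n : 0 < gam n := lt_le_trans gmin_gt0 (gam_ge n).

Let C_ge0 : 0 <= C.
Proof. by have := gam_near 0%N; rewrite expr0 mulr1; apply: le_trans. Qed.

Let gam_cvg : Rlinear_cvg gam gs. Proof. by exists C, r; split. Qed.

Let gam_le n : gam n <= gs + C.
Proof.
have := gam_near n; rewrite ler_norml => /andP[_]; rewrite lerBlDl => /le_trans; apply.
by rewrite lerD2l; apply: ler_piMr => //; rewrite exprn_ile1 // ltW.
Qed.

Lemma w_eq_next n : w n = z n.+1 + gam n *: A1 (z n.+1).
Proof. rewrite hz; exact (resolvent_graph_op hip (w n) hA1 (gam_gt0 n)). Qed.

Lemma x_eq n : x n = z n + gam n *: A1 (z n).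
Proof.
case: n => [|n]; first by rewrite hz0; exact (resolvent_graph_op hip (x 0%N) hA1 (gam_gt0 0)).
rewrite hx w_eq_next scalerDr scalerA scalerBl scale1r divfK ?gt_eqF //.
by rewrite addrAC addrCA subrr addr0.
Qed.

Lemma w_eq n : w n = y n + gam n *: A1 (z n).
Proof. by rewrite hw x_eq (addrC (z n)) addrK addrC. Qed.

Let shift n := zs + gam n *: A1 zs.

Lemma x_shift n : x n - shift n = (z n - zs) + gam n *: (A1 (z n) - A1 zs).
Proof. by rewrite x_eq scalerBr opprD addrACA. Qed.

Lemma w_shift n : w n - shift n = (y n - zs) + gam n *: (A1 (z n) - A1 zs).
Proof. by rewrite w_eq scalerBr opprD addrACA. Qed.

Lemma w_shift_next n :
  w n - shift n = (z n.+1 - zs) + gam n *: (A1 (z n.+1) - A1 zs).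
Proof. by rewrite w_eq_next scalerBr opprD addrACA. Qed.

Lemma monotone_zs n : 0 <= ip (z n - zs) (A1 (z n) - A1 zs).
Proof. exact: hA1.1. Qed.

Let kappa := dr_rate gmin (gs + C) `|L| mu.

Lemma w_shift_le n : `|w n - shift n| <= kappa * `|x n - shift n|.
Proof.
have [b [Ab hb]] := resolvent_spec hip (2%:R *: z n - x n) hA2 (gam_gt0 n).
rewrite -hy in Ab hb.
have zE : z n = y n + gam n *: (A1 (z n) + b).
  rewrite scalerDr addrCA -hb x_eq scaler_nat mulr2n opprD !addrA addrK.
  by rewrite addrC addKr.
apply: (@dr_step_le _ _ _ hip _ (z n - zs) _ (y n - zs) (A1 (z n) - A1 zs)
          (b + A1 zs) (gam n)) => //.
- by rewrite {1}zE addrACA addNr addr0 addrAC.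
- exact: w_shift.
- exact: x_shift.
- exact: monotone_zs.
- by have := hS Ab zs_zer; rewrite opprK.
- by apply: le_trans (hL _ _) _; rewrite ler_wpM2r // ler_norm.
Qed.

Lemma x_shift_succ_le n :
  `|x n.+1 - shift n.+1| <= (1 + 2 * C / gmin * r ^+ n) * `|w n - shift n|.
Proof.
rewrite x_shift w_shift_next; apply: (ip_ge0_normD_rescale hip).
- exact: monotone_zs.
- exact: ltW.
- exact: ltW.
- by rewrite lerDl !mulr_ge0 ?invr_ge0 ?exprn_ge0 // ltW.
- exact: Rlinear_cvg_ratio_le gmin_gt0 gam_ge (ltW r_gt0) (ltW r_lt1) gam_near n.
Qed.

Lemma x_shift_Rlinear : Rlinear_cvg (fun n => `|x n - shift n|) 0.
Proof.
apply: (@Rlinear_cvg_perturbed _ _ (2 * C / gmin) r kappa) => //.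
- by rewrite !mulr_ge0 ?invr_ge0 // ltW.
- exact: ltW.
- exact: dr_rate_gt0.
- exact: dr_rate_lt1.
- move=> n; apply: le_trans (x_shift_succ_le n) _.
  rewrite -[X in _ <= X]mulrA ler_wpM2l //.
    by rewrite addr_ge0 // !mulr_ge0 ?invr_ge0 ?exprn_ge0 // ltW.
  exact: w_shift_le.
Qed.

Lemma z_shift_le n : `|z n - zs| <= `|x n - shift n|.
Proof.
rewrite x_shift; apply: (ip_ge0_normDl hip).
by rewrite (ipZr hip) mulr_ge0 ?monotone_zs // ltW.
Qed.

Lemma A1z_shift_le n : gam n * `|A1 (z n) - A1 zs| <= `|x n - shift n|.
Proof.
rewrite -(gtr0_norm (gam_gt0 n)) -normrZ x_shift; apply: (ip_ge0_normDr hip).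
by rewrite (ipZr hip) mulr_ge0 ?monotone_zs // ltW.
Qed.

Lemma y_shift_le n : `|y n - zs| <= 2 * `|x n - shift n|.
Proof.
have -> : y n - zs = (w n - shift n) - gam n *: (A1 (z n) - A1 zs).
  by rewrite w_shift addrK.
apply: le_trans (ler_normB _ _) _; rewrite normrZ gtr0_norm //.
have := w_shift_le n; have := A1z_shift_le n; have := normr_ge0 (x n - shift n).
by have := dr_rate_lt1 (gs + C) `|L| gmin_gt0 mu_gt0; rewrite -/kappa; nra.
Qed.

Let xl := zs + gs *: A1 zs.

Lemma resolvent_xl : resolvent gs (graph_op A1) xl = zs.
Proof. exact: (resolvent_eq (a := A1 zs) hip hA1.1 gs_gt0). Qed.

Lemma xl_fix : Fix (T_op gs (graph_op A1) A2) xl.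
Proof.
rewrite /Fix /T_op /= resolvent_xl.
have -> : resolvent gs A2 (2%:R *: zs - xl) = zs.
  apply: (resolvent_eq hip hA2.1 gs_gt0 zs_zer).
  by rewrite /xl scaler_nat mulr2n opprD addrA addrK scalerN.
by rewrite subrK.
Qed.

Lemma shift_dist n : `|shift n - xl| = `|A1 zs| * `|gam n - gs|.
Proof. by rewrite opprD addrACA subrr add0r -scalerBl normrZ mulrC. Qed.

Lemma x_Rlinear : Rlinear_cvg x xl.
Proof.
apply: Rlinear_cvg_le
  (Rlinear_cvg0D x_shift_Rlinear (Rlinear_cvg0M `|A1 zs| (Rlinear_cvg_dist gam_cvg))) _.
move=> n; rewrite -shift_dist.
have -> : x n - xl = (x n - shift n) + (shift n - xl) by rewrite addrA subrK.
exact: ler_normD.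
Qed.

Lemma w_Rlinear : Rlinear_cvg w xl.
Proof.
have w_shift_cvg := Rlinear_cvg0M kappa x_shift_Rlinear.
apply: Rlinear_cvg_le
  (Rlinear_cvg0D w_shift_cvg (Rlinear_cvg0M `|A1 zs| (Rlinear_cvg_dist gam_cvg))) _.
move=> n; rewrite -shift_dist.
have -> : w n - xl = (w n - shift n) + (shift n - xl) by rewrite addrA subrK.
by apply: le_trans (ler_normD _ _) _; rewrite lerD2r w_shift_le.
Qed.

Lemma z_Rlinear : Rlinear_cvg z zs.
Proof. exact: Rlinear_cvg_le x_shift_Rlinear z_shift_le. Qed.

Lemma y_Rlinear : Rlinear_cvg y zs.
Proof. exact: Rlinear_cvg_le (Rlinear_cvg0M 2 x_shift_Rlinear) y_shift_le. Qed.

Lemma A1z_Rlinear : Rlinear_cvg (fun n => A1 (z n)) (A1 zs).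
Proof.
apply: Rlinear_cvg_le (Rlinear_cvg0M gmin^-1 x_shift_Rlinear) _ => n.
rewrite ler_pdivlMl //; apply: le_trans (A1z_shift_le n).
by rewrite ler_wpM2r.
Qed.

Lemma scaled_x_Rlinear : Rlinear_cvg (fun n => (gam n)^-1 *: (x n - z n)) (A1 zs).
Proof.
apply: Rlinear_cvg_le (Rlinear_cvg_dist A1z_Rlinear) _ => n.
by rewrite x_eq (addrC (z n)) addrK scalerA mulVf ?gt_eqF // scale1r.
Qed.

Lemma scaled_w_Rlinear : Rlinear_cvg (fun n => (gam n)^-1 *: (w n - y n)) (A1 zs).
Proof.
apply: Rlinear_cvg_le (Rlinear_cvg_dist A1z_Rlinear) _ => n.
by rewrite w_eq (addrC (y n)) addrK scalerA mulVf ?gt_eqF // scale1r.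
Qed.

Theorem douglas_rachford_Rlinear :
  exists xl : H,
    let zl := resolvent gs (graph_op A1) xl in
    let gl := gs^-1 *: (xl - zl) in
    [/\ Fix (T_op gs (graph_op A1) A2) xl /\
          Rlinear_cvg x xl /\ Rlinear_cvg w xl,
        zer (op_sum (graph_op A1) A2) zl /\
          Rlinear_cvg z zl /\ Rlinear_cvg y zl &
        zer (op_sub (op_inv (graph_op A1)) (op_compneg (op_inv A2))) gl /\
          Rlinear_cvg (fun n => (gam n)^-1 *: (x n - z n)) gl /\
          Rlinear_cvg (fun n => (gam n)^-1 *: (w n - y n)) gl].
Proof.
exists xl; rewrite /= resolvent_xl.
have -> : gs^-1 *: (xl - zs) = A1 zs.
  by rewrite /xl (addrC zs) addrK scalerA mulVf ?gt_eqF // scale1r.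
split; split.
- exact: xl_fix.
- by split; [exact: x_Rlinear | exact: w_Rlinear].
- by exists (A1 zs) => //; exists (- A1 zs) => //; rewrite subrr.
- by split; [exact: z_Rlinear | exact: y_Rlinear].
- by exists zs => //; exists zs => //; rewrite subrr.
- by split; [exact: scaled_x_Rlinear | exact: scaled_w_Rlinear].
Qed.

End DouglasRachford.
Theorem corollary4p5 (R : realType) (H : completeNormedModType R)
  (ip : H -> H -> R) (Gam : set R) (A1 : H -> H) (A2 : H -> set H)
  (L mu : R) (gam : nat -> R) (gs : R) (x0 : H)
  (x z y w : nat -> H) :
  is_inner_product ip ->
  pos_closed_interval Gam ->
  maximally_monotone ip (graph_op A1) ->
  lipschitz_op L A1 ->
  0 < mu ->
  maximally_monotone ip A2 ->
  strongly_monotone ip mu A2 ->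
  zer (op_sum (graph_op A1) A2) !=set0 ->
  (forall n, Gam (gam n)) ->
  Gam gs ->
  Rlinear_cvg gam gs ->
  x 0%N = x0 ->
  z 0%N = resolvent (gam 0%N) (graph_op A1) x0 ->
  (forall n, y n = resolvent (gam n) A2 (2%:R *: z n - x n)) ->
  (forall n, w n = x n - z n + y n) ->
  (forall n, z n.+1 = resolvent (gam n) (graph_op A1) (w n)) ->
  (forall n, x n.+1 = (gam n.+1 / gam n) *: w n
                      + (1 - gam n.+1 / gam n) *: z n.+1) ->
  exists xl : H,
    let zl := resolvent gs (graph_op A1) xl in
    let gl := gs^-1 *: (xl - zl) in
    [/\ Fix (T_op gs (graph_op A1) A2) xl /\
          Rlinear_cvg x xl /\ Rlinear_cvg w xl,
        zer (op_sum (graph_op A1) A2) zl /\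
          Rlinear_cvg z zl /\ Rlinear_cvg y zl &
        zer (op_sub (op_inv (graph_op A1)) (op_compneg (op_inv A2))) gl /\
          Rlinear_cvg (fun n => (gam n)^-1 *: (x n - z n)) gl /\
          Rlinear_cvg (fun n => (gam n)^-1 *: (w n - y n)) gl].
Proof.
move=> hip [_ Gcl _ Gpos] hA1 hL mu_gt0 hA2 hS [zs [a a_eq [b hb sum0]]] hGam hGs
  [C [r [_ r_gt0 r_lt1 gam_near]]] hx0 hz0 hy hw hz hx.
have [gmin gmin_gt0 Gmin] := closed_gt0_lbound Gcl Gpos.
have zs_zer : A2 zs (- A1 zs) by rewrite -a_eq -[- a]addr0 -sum0 addKr.
rewrite -hx0 in hz0.
exact: (douglas_rachford_Rlinear hip hA1 hL mu_gt0 hA2 hS zs_zer gmin_gt0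
  (fun n => Gmin _ (hGam n)) (Gpos _ hGs) r_gt0 r_lt1 gam_near hz0 hy hw hz hx).
Qed.
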